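(* Let $\sigma\colon\Gamma\to2^V$ be a quasi-geometric homology triangulation of a simplex, $E$ a face of $\Gamma$ with $|V|-|\sigma(E)|=1$, and $L(\Gamma,E)$ the local face module with respect to a special l.s.o.p. Let $\Delta\subset\mathrm{lk}_\Gamma(E)$ be a subcomplex. Then $$\dim_k\big(L(\Gamma,E)|_\Delta\big)_1\ge|\{v\text{ a vertex of }\Delta:\{v\}\sqcup E\text{ interior}\}|-1.$$
   Context: Fix an infinite field $k$; homology is with coefficients in $k$. A $d$-dimensional simplicial complex $\Gamma$ with trivial reduced homology is a homology ball of dimension $d$ if there is a subcomplex $\partial\Gamma$ such that $\partial\Gamma$ is a homology sphere of dimension $d-1$, $\mathrm{lk}_\Gamma(F)$ is a homology sphere of dimension $d-|F|$ for $F\notin\partial\Gamma$, and $\mathrm{lk}_\Gamma(F)$ is a homology ball of dimension $d-|F|$ for nonempty $F\in\partial\Gamma$; its interior faces are those not in $\partial\Gamma$. A homology triangulation of $2^V$ is a finite simplicial complex $\Gamma$ with $\sigma\colon\Gamma\to2^V$ such that for every nonempty $U\subset V$, $\Gamma_U:=\sigma^{-1}(2^U)$ is a homology ball of dimension $|U|-1$ whose interior faces are exactly $\sigma^{-1}(U)$. $\sigma(F)$ is the carrier; $\sigma(w)=\sigma(\{w\})$. It is quasi-geometric if there is no face $F$ and $U\subset V$ with $\dim\Gamma_U<\dim F$ and $\sigma(w)\subset U$ for all vertices $w\in F$. A face $G$ is interior if $\sigma(G)=V$. $k[\Delta]$ is the face ring (variables $x_w$, $x^F=\prod_{w\in F}x_w$),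 graded by degree; the restriction map $k[\mathrm{lk}_\Gamma(E)]\to k[\Delta]$ sends $x^G$ to $x^G$ if $G\in\Delta$ and $0$ otherwise, and $M|_\Delta:=M\otimes_{k[\mathrm{lk}_\Gamma(E)]}k[\Delta]$. An l.s.o.p. for a finitely generated graded $k$-algebra of Krull dimension $d$ is a sequence of $d$ degree-one elements with finite-dimensional quotient; an l.s.o.p. $\theta_1,\ldots,\theta_d$ of $k[\mathrm{lk}_\Gamma(E)]$ ($d=|V|-|E|$) is special if for each $v\in V\smallsetminus\sigma(E)$ there is an element $\theta_v$ of it supported on vertices $w$ with $v\in\sigma(w)$, distinct for distinct $v$. $L(\Gamma,E)$ is the image of $(x^G:G\in\mathrm{lk}_\Gamma(E),\ G\sqcup E\text{ interior})$ in $k[\mathrm{lk}_\Gamma(E)]/(\theta_1,\ldots,\theta_d)$. *)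

From mathcomp Require Import all_boot all_order all_algebra.
From mathcomp Require Import mpoly.

Set Implicit Arguments.
Unset Strict Implicit.
Unset Printing Implicit Defensive.

Import GRing.Theory.
Local Open Scope ring_scope.

Section Complexes.
Variable N : nat.
Notation face := {set 'I_N}.
Notation cplx := {set {set 'I_N}}.

Definition is_complex (K : cplx) : Prop :=
  forall F G : face, F \in K -> G \subset F -> G \in K.

Definition link (K : cplx) (F : face) : cplx :=
  [set G in K | [disjoint G & F] && (G :|: F \in K)].

(* faces with exactly j elements (i.e. of dimension j-1) *)
Definition layer (K : cplx) (j : nat) : cplx := [set F in K | #|F| == j].

Section Hom.
Variable k : fieldType.

(* simplicial boundary map from faces of size j.+1 to faces of size j,
   with respect to the order of 'I_N; row-vector convention. *)
Definition bdry (K : cplx) (j : nat) : 'M[k]_(#|layer K j.+1|, #|layer K j|) :=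
  \matrix_(a < #|layer K j.+1|, b < #|layer K j|)
    (let F : {set 'I_N} := enum_val a in let G : {set 'I_N} := enum_val b in
     if G \subset F then
       (-1) ^+ #|[set u in G | [forall w in F :\: G, (u < w)%N]]|
     else 0).

(* dimension of the reduced simplicial homology group H~_{j-1}(K; k) *)
Definition rbetti (K : cplx) (j : nat) : nat :=
  (if j is j'.+1 then \rank (kermx (bdry K j')) else #|layer K 0|)
  - \rank (bdry K j).

Definition acyclic (K : cplx) : Prop := forall j, rbetti K j = 0%N.

Definition hsphere (d : int) (K : cplx) : Prop :=
  [/\ is_complex K, set0 \in K &
    forall F, F \in K -> forall j : nat,
      rbetti (link K F) j = (if (j%:Z - 1 == d - #|F|%:Z)%R then 1%N else 0%N)].

(* hball_f fuel m K B : K is a homology ball of dimension m-1 with boundary B.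
   The fuel only serves to make the recursion structural; see hball_bd. *)
Fixpoint hball_f (fuel m : nat) (K B : cplx) : Prop :=
  match fuel with
  | 0 => False
  | f.+1 =>
    match m with
    | 0 => False
    | m'.+1 =>
      [/\ is_complex K /\ set0 \in K,
          (exists2 F, F \in K & #|F| = m) /\ (forall F, F \in K -> #|F| <= m)%N,
          acyclic K /\ B \subset K /\ hsphere (m%:Z - 2) B,
          (forall F, F \in K -> F \notin B ->
              hsphere (m%:Z - 1 - #|F|%:Z) (link K F)) &
          (forall F, F \in B -> F != set0 ->
              exists B', hball_f f (m - #|F|)%N (link K F) B')]
    end
  end.

Definition hball_bd (m : nat) (K B : cplx) : Prop := hball_f m m K B.

End Hom.
End Complexes.

Section Triang.
Variables (k : fieldType) (N : nat) (V : finType).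
Variable Gam : {set {set 'I_N}}.
Variable sigma : {set 'I_N} -> {set V}.

(* Gamma_U = sigma^{-1}(2^U) *)
Definition restrU (U : {set V}) : {set {set 'I_N}} :=
  [set F in Gam | sigma F \subset U].

Definition homology_triangulation : Prop :=
  is_complex Gam /\
  forall U : {set V}, U != set0 ->
    hball_bd k #|U| (restrU U) [set F in restrU U | sigma F != U].

Definition quasi_geometric : Prop :=
  ~ exists (F : {set 'I_N}) (U : {set V}),
      [/\ F \in Gam,
          (forall G, G \in restrU U -> #|G| < #|F|)%N &
          forall w, w \in F -> sigma [set w] \subset U].

Definition interior (G : {set 'I_N}) : bool := sigma G == setT.
End Triang.

Section Rings.
Variables (k : fieldType) (N : nat).
Notation S := {mpoly k[N]}.

Definition monom (F : {set 'I_N}) : S := \prod_(i in F) 'X_i.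

Definition ideal_gen (G : S -> Prop) : S -> Prop :=
  fun p => exists r : seq (S * S),
    (forall q, q \in r -> G q.2) /\ p = \sum_(q <- r) q.1 * q.2.

Definition gunion (G1 G2 : S -> Prop) : S -> Prop := fun p => G1 p \/ G2 p.

Definition gprod (I J : S -> Prop) : S -> Prop :=
  fun p => exists a b, [/\ I a, J b & p = a * b].

(* generators of the Stanley-Reisner ideal: k[K] = S / ideal_gen (sr_gens K) *)
Definition sr_gens (K : {set {set 'I_N}}) : S -> Prop :=
  fun p => exists F, F \notin K /\ p = monom F.

Definition lin_form (c : 'I_N -> k) : S := \sum_(w < N) c w *: 'X_w.

Definition deg1 (p : S) : Prop := exists c, p = lin_form c.

(* S / I is a finite-dimensional k-vector space *)
Definition findim_quot (I : S -> Prop) : Prop :=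
  exists s : seq S, forall p, exists a : nat -> k,
    I (p - \sum_(i < size s) a i *: s`_i).

(* dim_k (M/N)_1 >= c, for homogeneous ideals N <= M of S *)
Definition dim1_quot_ge (M Nn : S -> Prop) (c : nat) : Prop :=
  exists s : 'I_c -> S,
    (forall i, M (s i) /\ deg1 (s i)) /\
    forall a : 'I_c -> k, Nn (\sum_i a i *: s i) -> forall i, a i = 0.
End Rings.

Section LocalFaceModule.
Variables (k : fieldType) (N : nat) (V : finType).
Variable Gam : {set {set 'I_N}}.
Variable sigma : {set 'I_N} -> {set V}.
Variable E : {set 'I_N}.
Variable d : nat.
(* theta_i = \sum_w c i w x_w, i < d : the (representatives of the) l.s.o.p. *)
Variable c : 'I_d -> 'I_N -> k.

Definition theta_gens : {mpoly k[N]} -> Prop := fun p => exists i, p = lin_form (c i).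

Definition int_gens : {mpoly k[N]} -> Prop :=
  fun p => exists G, [/\ G \in link Gam E, interior sigma (G :|: E) & p = @monom k N G].

(* theta is an l.s.o.p. of k[lk E] (of length d): k[lk E]/(theta) is finite-dimensional *)
Definition is_lsop : Prop :=
  findim_quot (ideal_gen (gunion (@sr_gens k N (link Gam E)) theta_gens)).

Definition is_special : Prop :=
  exists f : V -> 'I_d,
    {in ~: sigma E &, injective f} /\
    forall v, v \notin sigma E -> forall w, c (f v) w != 0 -> v \in sigma [set w].

(* Lift to S of L(Gam,E) \subset k[lk E]/(theta):  L = Lnum / (I_lk + (theta)). *)
Definition Lnum : {mpoly k[N]} -> Prop :=
  ideal_gen (gunion (@sr_gens k N (link Gam E)) (gunion theta_gens int_gens)).

(* L|_Delta = L (x)_{k[lk E]} k[Delta] = L / I_Delta L = Lnum / Lden_Delta *)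
Definition Lden (Delta : {set {set 'I_N}}) : {mpoly k[N]} -> Prop :=
  ideal_gen (gunion (@sr_gens k N (link Gam E))
            (gunion theta_gens (gprod (ideal_gen (@sr_gens k N Delta)) Lnum))).
End LocalFaceModule.

(* Since E is not interior and the empty face lies in Delta, the degree-one
   part of L(Gam,E)|_Delta is the span of the x_v with {v} u E interior, modulo
   theta.  The link of E in the ball Gam_sigma(E) is a homology sphere, so it
   has a face G with d - 1 vertices, none of them interior; as theta is an
   l.s.o.p., the coefficient vectors of theta on G are independent (a nonzero
   common zero of theta supported on a face of lk E would make
   k[lk E]/(theta) infinite-dimensional).  So, after discarding one vertex vs,
   every interior vertex v of Delta admits a common zero p of theta supported
   on G u {vs, v} with p_v = 1.  Restricting to the line t p, the coefficient
   of t is a linear form killing the denominator of L|_Delta (which vanishes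
   to order two there) and dual to the x_w. *)

From mathcomp Require Import all_boot all_order all_algebra.
From mathcomp Require Import mpoly.
From mathcomp Require Import zify.

Set Implicit Arguments.
Unset Strict Implicit.
Unset Printing Implicit Defensive.

Import GRing.Theory.
Local Open Scope ring_scope.

Section LineEvaluation.
Variables (k : fieldType) (N : nat).
Implicit Types (p : 'rV[k]_N) (f g : {mpoly k[N]}).

Definition line_eval p f : {poly k} := mmap (@polyC k) (fun w => (p 0 w)%:P * 'X) f.

Lemma line_evalM p : {morph line_eval p : f g / f * g}.
Proof. exact: rmorphM. Qed.

Lemma line_evalB p : {morph line_eval p : f g / f - g}.
Proof. exact: rmorphB. Qed.

Lemma line_evalXn p f n : line_eval p (f ^+ n) = line_eval p f ^+ n.
Proof. exact: rmorphXn. Qed.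

Lemma line_eval_sum p I (r : seq I) (P : pred I) (F : I -> {mpoly k[N]}) :
  line_eval p (\sum_(i <- r | P i) F i) = \sum_(i <- r | P i) line_eval p (F i).
Proof. exact: rmorph_sum. Qed.

Lemma line_eval_prod p I (r : seq I) (P : pred I) (F : I -> {mpoly k[N]}) :
  line_eval p (\prod_(i <- r | P i) F i) = \prod_(i <- r | P i) line_eval p (F i).
Proof. exact: rmorph_prod. Qed.

Lemma line_evalX p w : line_eval p 'X_w = (p 0 w)%:P * 'X.
Proof. by rewrite /line_eval mmapX mmap1U. Qed.

Lemma line_evalZ p a f : line_eval p (a *: f) = a%:P * line_eval p f.
Proof. by rewrite /line_eval mmapZ. Qed.

Lemma line_eval_monom p (F : {set 'I_N}) :
  line_eval p (monom k F) = (\prod_(w in F) p 0 w)%:P * 'X ^+ #|F|.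
Proof.
rewrite /monom line_eval_prod.
under eq_bigr => w _ do rewrite line_evalX.
by rewrite big_split /= -rmorph_prod prodr_const.
Qed.

Lemma line_eval_lin_form p a :
  line_eval p (lin_form a) = (\sum_w a w * p 0 w)%:P * 'X.
Proof.
rewrite /lin_form line_eval_sum rmorph_sum mulr_suml.
by apply: eq_bigr => w _; rewrite line_evalZ line_evalX rmorphM mulrA.
Qed.

Lemma dvdp_line_eval_ideal p (G : {mpoly k[N]} -> Prop) (D : {poly k}) f :
  (forall g, G g -> D %| line_eval p g) -> ideal_gen G f -> D %| line_eval p f.
Proof.
move=> DG [r [Gr ->]]; rewrite line_eval_sum big_seq.
apply: (big_ind (fun P => D %| P)) => [|P Q|q qr]; [exact: dvdp0 | exact: dvdp_add |].
by rewrite line_evalM dvdp_mull //; apply: DG; apply: Gr.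
Qed.

Lemma dvdX_line_eval_monom p (F : {set 'I_N}) :
  F != set0 -> 'X %| line_eval p (monom k F).
Proof.
move=> F0; rewrite line_eval_monom dvdp_mull // -{1}(expr1 'X) dvdp_exp2l //.
by rewrite card_gt0.
Qed.

Lemma dvdX_line_eval_sr_ideal p (K : {set {set 'I_N}}) f :
  set0 \in K -> ideal_gen (@sr_gens k N K) f -> 'X %| line_eval p f.
Proof.
move=> K0; apply: dvdp_line_eval_ideal => _ [F [FK ->]].
by apply: dvdX_line_eval_monom; apply: contraNneq FK => ->.
Qed.

Lemma dim1_quot_ge_points (M Nn : {mpoly k[N]} -> Prop) n (f : 'I_n -> 'I_N) :
  (forall i, M 'X_(f i)) ->
  (forall j, exists p, (forall g, Nn g -> 'X^2 %| line_eval p g) /\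
                       forall i, p 0 (f i) = (i == j)%:R) ->
  dim1_quot_ge M Nn n.
Proof.
move=> Mf dual; exists (fun i => 'X_(f i)); split=> [i|a Na j].
  split=> //; exists (fun w => (w == f i)%:R).
  rewrite /lin_form (bigD1 (f i)) //= eqxx scale1r big1 ?addr0 // => w /negbTE->.
  exact: scale0r.
have [p [dvdN pf]] := dual j.
have /dvdpP[q] := dvdN _ Na.
rewrite line_eval_sum (bigD1 j) //= big1 => [|i ij]; last first.
  by rewrite line_evalZ line_evalX pf (negbTE ij) polyC0 mul0r mulr0.
rewrite line_evalZ line_evalX pf eqxx polyC1 mul1r addr0.
by move/(congr1 (coefp 1)); rewrite /= coefCM coefX coefMXn mulr1.
Qed.

End LineEvaluation.

Section Complexes.
Variables (k : fieldType) (N : nat).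
Implicit Types (K : {set {set 'I_N}}) (F : {set 'I_N}).

Lemma link_complex K F : is_complex K -> is_complex (link K F).
Proof.
move=> Kc G H; rewrite !inE => /and3P[GK dGF GFK] HG.
rewrite (Kc G H GK HG) (Kc _ _ GFK (setSU F HG)) andbT.
by rewrite disjoints_subset (subset_trans HG) // -disjoints_subset.
Qed.

Lemma link_set0 K : link K set0 = K.
Proof.
by apply/setP => G; rewrite inE disjoints_subset setC0 subsetT setU0 andbb.
Qed.

Lemma set0_in_link K F : is_complex K -> F \in K -> set0 \in link K F.
Proof.
move=> Kc FK; rewrite inE (Kc _ _ FK (sub0set _)) set0U FK andbT.
by rewrite disjoints_subset sub0set.
Qed.

Lemma rbetti_gt0_layer K j : (0 < rbetti k K j)%N -> layer K j != set0.
Proof.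
rewrite -card_gt0 /rbetti; case: j => [|j]; first lia.
have := rank_leq_row (kermx (bdry k K j)); lia.
Qed.

Lemma hsphere_face (n : nat) K :
  hsphere k (n%:Z - 1) K -> exists2 F, F \in K & #|F| = n.
Proof.
case=> _ K0 /(_ _ K0 n); rewrite link_set0 cards0 subr0 eqxx => Kn.
have /set0Pn[F] : layer K n != set0 by apply: rbetti_gt0_layer; rewrite Kn.
by rewrite inE => /andP[FK /eqP]; exists F.
Qed.

End Complexes.

Lemma noninterior_link_face (k : fieldType) N (V : finType)
    (Gam : {set {set 'I_N}}) (sigma : {set 'I_N} -> {set V}) E :
  homology_triangulation k Gam sigma -> E \in Gam -> ~~ interior sigma E ->
  exists G, [/\ G \in link Gam E, #|G| = (#|sigma E| - #|E|)%N &
                forall w, w \in G -> ~~ interior sigma ([set w] :|: E)].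
Proof.
case=> Gc hball EG nintE.
have [U0|U0] := eqVneq (sigma E) set0.
  exists set0; split=> [||w]; first exact: set0_in_link.
    by rewrite U0 !cards0.
  by rewrite inE.
move: (hball _ U0); rewrite /hball_bd.
set U := sigma E; set K := restrU Gam sigma U.
case Um: #|U| => [|m]; first by move: U0; rewrite -card_gt0 Um.
case=> [[Kc _] [_ Ksz] _ Kint _].
have EK : E \in K by rewrite inE EG subxx.
have EU : (#|E| <= m.+1)%N := Ksz _ EK.
have [G GK cG] : exists2 G, G \in link K E & #|G| = (m.+1 - #|E|)%N.
  apply: hsphere_face; have -> : (m.+1 - #|E|)%:Z - 1 = m.+1%:Z - 1 - #|E|%:Z by lia.
  by apply: Kint; rewrite // inE EK eqxx.
have KG H : H \in K -> H \in Gam by rewrite inE => /andP[].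
move: GK; rewrite inE => /and3P[GK dGE GEK].
exists G; split=> [||w wG]; [by rewrite inE KG // dGE KG | by [] |].
have : [set w] :|: E \in K by apply: (Kc _ _ GEK); rewrite setSU // sub1set.
rewrite inE => /andP[_ wEU]; apply: contra nintE => /eqP wET.
by rewrite /interior eqEsubset subsetT -wET.
Qed.

Section ThetaMatrix.
Variables (k : fieldType) (N : nat) (Gam : {set {set 'I_N}}) (E : {set 'I_N}).
Variables (d : nat) (c : 'I_d -> 'I_N -> k).
Hypothesis Gc : is_complex Gam.
Implicit Types (p : 'rV[k]_N) (G : {set 'I_N}).

Definition theta_mx : 'M[k]_(N, d) := \matrix_(w, i) c i w.

Definition face_rows G : 'M[k]_(#|G|, N) := rowsub (fun j : 'I_#|G| => enum_val j) 1%:M.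

Lemma face_rowsE G (u : 'rV_#|G|) w :
  (u *m face_rows G) 0 w = \sum_(j | enum_val j == w) u 0 j.
Proof.
rewrite mxE [RHS]big_mkcond /=; apply: eq_bigr => j _.
by rewrite /face_rows !mxE; case: eqP; rewrite ?mulr1 ?mulr0.
Qed.

Lemma face_rows_notin G (u : 'rV_#|G|) w : w \notin G -> (u *m face_rows G) 0 w = 0.
Proof.
move=> wG; rewrite face_rowsE big_pred0 // => j.
by apply: contraNF wG => /eqP <-; apply: enum_valP.
Qed.

Lemma face_rows_enum G (u : 'rV_#|G|) j : (u *m face_rows G) 0 (enum_val j) = u 0 j.
Proof.
rewrite face_rowsE (big_pred1 j) // => j'.
by rewrite (inj_eq enum_val_inj).
Qed.

Lemma line_eval_theta p i :
  line_eval p (lin_form (c i)) = ((p *m theta_mx) 0 i)%:P * 'X.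
Proof.
rewrite line_eval_lin_form !mxE; congr (_%:P * _).
by apply: eq_bigr => w _; rewrite mxE mulrC.
Qed.

Lemma lsop_point_eq0 p :
  is_lsop Gam E c -> p *m theta_mx = 0 -> [set w | p 0 w != 0] \in link Gam E ->
  p = 0.
Proof.
move=> [s Hs] p_ker p_supp.
have vanish f : ideal_gen (gunion (@sr_gens k N (link Gam E)) (theta_gens c)) f ->
    line_eval p f = 0.
  move=> If; apply/dvd0pP; apply: dvdp_line_eval_ideal If => _ [[F [FL ->]]|[i ->]].
    have /subsetPn[w wF] : ~~ (F \subset [set w | p 0 w != 0]).
      by apply: contra FL; apply: (link_complex Gc).
    rewrite inE negbK => /eqP pw0.
    by rewrite line_eval_monom (bigD1 w) //= pw0 mul0r polyC0 mul0r dvdpp.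
  by rewrite line_eval_theta p_ker mxE polyC0 mul0r dvdpp.
pose n := (\max_(i < size s) size (line_eval p s`_i))%N.
apply/rowP => w; have [a /vanish/eqP] := Hs ('X_w ^+ n).
rewrite line_evalB line_evalXn line_evalX line_eval_sum subr_eq0 => /eqP.
move/(congr1 (coefp n)); rewrite /= exprMn -rmorphXn coefCM coefXn eqxx mulr1.
rewrite coef_sum big1 => [/eqP|i _]; first by rewrite expf_eq0 mxE => /andP[_ /eqP].
rewrite line_evalZ coefCM nth_default ?mulr0 //.
exact: (@leq_bigmax _ (fun i : 'I_(size s) => size (line_eval p s`_i)) i).
Qed.

Lemma row_free_theta_face G :
  is_lsop Gam E c -> G \in link Gam E -> row_free (face_rows G *m theta_mx).
Proof.
move=> lsop GL; apply: inj_row_free => u; rewrite mulmxA => u_ker.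
have p0 : u *m face_rows G = 0.
  apply: lsop_point_eq0 => //; apply: (link_complex Gc GL).
  apply/subsetP => w; rewrite inE; apply: contraR => wG.
  by rewrite face_rows_notin ?eqxx.
by apply/rowP => j; rewrite -face_rows_enum p0 !mxE.
Qed.

Lemma theta_kernel_point G v vs :
  (row v theta_mx <= face_rows G *m theta_mx + row vs theta_mx)%MS ->
  exists p, p *m theta_mx = 0 /\
            forall u, u \notin G -> u != vs -> p 0 u = (u == v)%:R.
Proof.
case/sub_addsmxP => -[x y] /= xy.
exists (delta_mx 0 v - x *m face_rows G - y *m delta_mx 0 vs); split.
  by rewrite !mulmxBl -!mulmxA -!rowE xy (addrC (x *m _)) addrK subrr.
move=> u uG uvs; have := face_rows_notin x uG.
rewrite !mxE => ->; rewrite big_ord1 !mxE eqxx /= (negbTE uvs).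
by rewrite mulr0 !subr0.
Qed.

End ThetaMatrix.

Arguments face_rows {k N} G.

Lemma addsmx_corank1_cover (F : fieldType) (T : finType) m n (M : 'M[F]_(m, n))
    (z : T -> 'rV_n) (A : {set T}) :
  (n <= (\rank M).+1)%N -> A != set0 ->
  exists2 vs, vs \in A & forall v, v \in A -> (z v <= M + z vs)%MS.
Proof.
move=> rankM /set0Pn[v0 v0A].
have [vs /andP[vsA zvsM] | inM] := pickP (fun u => (u \in A) && ~~ (z u <= M)%MS).
  exists vs => // v _; apply: submx_full.
  have : (M < M + z vs)%MS.
    rewrite ltmxE addsmxSl /=; apply: contra zvsM.
    exact: submx_trans (addsmxSr M (z vs)).
  rewrite ltmxErank => /andP[_ rank_lt].
  by rewrite /row_full eqn_leq rank_leq_col; apply: leq_trans rankM _.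
exists v0 => // v vA.
have := inM v; rewrite vA /= => /negbFE zvM.
exact: submx_trans zvM (addsmxSl _ _).
Qed.

Section LocalFaceModuleRestriction.
Variables (k : fieldType) (N : nat) (V : finType).
Variables (Gam : {set {set 'I_N}}) (sigma : {set 'I_N} -> {set V}) (E : {set 'I_N}).
Variables (d : nat) (c : 'I_d -> 'I_N -> k).
Hypotheses (Gc : is_complex Gam) (EG : E \in Gam) (nintE : ~~ interior sigma E).

Lemma Lnum_X w :
  [set w] \in link Gam E -> interior sigma ([set w] :|: E) -> Lnum Gam sigma E c 'X_w.
Proof.
move=> wL wint; exists [:: (1, 'X_w)]; split; last by rewrite big_seq1 mul1r.
move=> _ /[!inE] /eqP-> /=; right; right; exists [set w].
by rewrite /monom big_set1.
Qed.

Section LinePoint.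
Variable p : 'rV[k]_N.
Hypotheses (p_ker : p *m theta_mx c = 0)
           (p_supp : forall w, [set w] \notin link Gam E -> p 0 w = 0).

Lemma Lnum_line_eval_dvdX f : Lnum Gam sigma E c f -> 'X %| line_eval p f.
Proof.
apply: dvdp_line_eval_ideal => _ [[F [FL ->]]|[[i ->]|[F [_ Fint ->]]]].
- apply: dvdX_line_eval_monom; apply: contraNneq FL => ->.
  exact: set0_in_link.
- by rewrite line_eval_theta dvdp_mull.
- apply: dvdX_line_eval_monom; apply: contraTneq Fint => ->.
  by rewrite set0U.
Qed.

Lemma Lden_line_eval_dvdX2 (Delta : {set {set 'I_N}}) f :
  set0 \in Delta -> Lden Gam sigma E c Delta f -> 'X^2 %| line_eval p f.
Proof.
move=> D0; apply: dvdp_line_eval_ideal => _ [[F [FL ->]]|[[i ->]|[a [b [Ia Lb ->]]]]].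
- have [/eqP/cards1P[w Fw]|F1] := eqVneq #|F| 1%N.
    rewrite line_eval_monom Fw big_set1 p_supp -?Fw //.
    by rewrite polyC0 mul0r dvdp0.
  have F0 : F != set0 by apply: contraNneq FL => ->; exact: set0_in_link.
  rewrite line_eval_monom dvdp_mull // dvdp_exp2l //.
  by move: F0 F1; rewrite -card_gt0; lia.
- by rewrite line_eval_theta p_ker mxE polyC0 mul0r dvdp0.
- rewrite line_evalM expr2 dvdp_mul //; last exact: Lnum_line_eval_dvdX.
  exact: dvdX_line_eval_sr_ideal Ia.
Qed.

End LinePoint.

Lemma Lden_dual_point (Delta : {set {set 'I_N}}) G v vs :
  set0 \in Delta -> G \in link Gam E ->
  [set v] \in link Gam E -> [set vs] \in link Gam E ->
  (row v (theta_mx c) <= face_rows G *m theta_mx c + row vs (theta_mx c))%MS ->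
  exists p, (forall g, Lden Gam sigma E c Delta g -> 'X^2 %| line_eval p g) /\
            forall u, u \notin G -> u != vs -> p 0 u = (u == v)%:R.
Proof.
move=> D0 GL vL vsL /theta_kernel_point[p [p_ker p_delta]].
exists p; split=> // g; apply: Lden_line_eval_dvdX2 => // w wL; rewrite p_delta.
- by case: eqP wL => // ->; rewrite vL.
- by apply: contraNN wL => wG; apply: (link_complex Gc GL); rewrite sub1set.
- by apply: contraNneq wL => ->.
Qed.

End LocalFaceModuleRestriction.

Theorem lemma5p6 (k : fieldType)
  (k_infinite : forall s : seq k, exists x : k, x \notin s)
  (N : nat) (V : finType)
  (Gam : {set {set 'I_N}}) (sigma : {set 'I_N} -> {set V})
  (htri : homology_triangulation k Gam sigma)
  (hqg : quasi_geometric Gam sigma)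
  (E : {set 'I_N}) (hE : E \in Gam)
  (hEV : (#|V| - #|sigma E|)%N = 1%N)
  (c : 'I_(#|V| - #|E|) -> 'I_N -> k)
  (hlsop : is_lsop Gam E c)
  (hspecial : is_special sigma E c)
  (Delta : {set {set 'I_N}})
  (hDelta : is_complex Delta) (hDsub : Delta \subset link Gam E) :
  dim1_quot_ge (Lnum Gam sigma E c) (Lden Gam sigma E c Delta)
    (#|[set v : 'I_N | ([set v] \in Delta) && interior sigma ([set v] :|: E)]| - 1)%N.
Proof.
set A := [set v | _].
have [->|A0] := eqVneq A set0.
  by rewrite cards0; exists (fun=> 0); split=> [[]|? ? []].
have AL v : v \in A -> [set v] \in link Gam E.
  by rewrite inE => /andP[vD _]; apply: (subsetP hDsub).
have Aint v : v \in A -> interior sigma ([set v] :|: E) by rewrite inE => /andP[].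
have nintE : ~~ interior sigma E.
  by apply/negP => /eqP sET; move: hEV; rewrite sET cardsT subnn.
have [G [GL cG Gnint]] := noninterior_link_face htri hE nintE.
have AG v : v \in A -> v \notin G by move=> vA; apply/negP => /Gnint; rewrite Aint.
have [vs vsA cover] :
    exists2 vs, vs \in A & forall v, v \in A ->
      (row v (theta_mx c) <= face_rows G *m theta_mx c + row vs (theta_mx c))%MS.
  apply: addsmx_corank1_cover A0.
  by rewrite (eqP (row_free_theta_face htri.1 hlsop GL)) cG; lia.
have D0 : set0 \in Delta.
  by move: vsA; rewrite inE => /andP[vsD _]; exact: (hDelta _ _ vsD (sub0set _)).
have cB : #|A :\ vs| = (#|A| - 1)%N by rewrite (cardsD1 vs A) vsA; lia.
pose f i : 'I_N := enum_val (cast_ord (esym cB) i).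
have fB i : f i \in A :\ vs := enum_valP _.
have finj : injective f by move=> i j /enum_val_inj /cast_ord_inj.
apply: (dim1_quot_ge_points (f := f)) => [i|j].
  by have /setD1P[_ fiA] := fB i; exact: Lnum_X (AL _ fiA) (Aint _ fiA).
have /setD1P[_ fjA] := fB j.
have [p [p_den p_delta]] :=
  Lden_dual_point htri.1 hE nintE D0 GL (AL _ fjA) (AL _ vsA) (cover _ fjA).
exists p; split=> // i.
have /setD1P[fivs fiA] := fB i.
by rewrite p_delta ?(inj_eq finj) ?AG.
Qed.
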